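(* Let $K$ be an algebraically closed field of characteristic $p>0$ (in the setting below). Then there exists a sequence $x_1,x_2,\dots\in K^\vee$ such that $\{\pi(x_1),\pi(x_2),\dots\}$ is an orthogonal subset of $K^\vee/K$, where $\pi:K^\vee\to K^\vee/K$ is the canonical quotient map.
   Context: $K$ is a complete non-archimedean non-trivially valued field which is not spherically complete; $K^\vee$ is a fixed spherically complete valued field which is an immediate extension of $K$, regarded as a $K$-normed space with its absolute value. $K^\vee/K$ carries the quotient norm $\|\pi(z)\|=\inf_{a\in K}|z-a|$. A subset $S$ not containing $0$ is orthogonal if $\|\sum_i\lambda_is_i\|=\max_i\|\lambda_is_i\|$ for all finitely many distinct $s_i\in S$ and $\lambda_i\in K$. *)

From HB Require Import structures.
From mathcomp Require Import all_boot all_order all_algebra.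
From mathcomp Require Import boolp classical_sets reals.
Set Implicit Arguments. Unset Strict Implicit. Unset Printing Implicit Defensive.
Import Order.TTheory GRing.Theory Num.Theory.
Local Open Scope ring_scope.
Local Open Scope classical_set_scope.

Section Defs.
Variable R : realType.

Definition na_absval (F : fieldType) (v : F -> R) : Prop :=
  [/\ forall x, 0 <= v x,
      forall x, v x = 0 <-> x = 0,
      forall x y, v (x * y) = v x * v y &
      forall x y, v (x + y) <= Num.max (v x) (v y)].

Definition nontrivial_absval (F : fieldType) (v : F -> R) : Prop :=
  exists x, v x != 0 /\ v x != 1.

Definition complete_absval (F : fieldType) (v : F -> R) : Prop :=
  forall u : nat -> F,
    (forall e, 0 < e -> exists N, forall m n, (N <= m)%N -> (N <= n)%N ->
        v (u m - u n) < e) ->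
    exists l, forall e, 0 < e -> exists N, forall n, (N <= n)%N -> v (u n - l) < e.

Definition cball (F : fieldType) (v : F -> R) (c : F) (r : R) : set F :=
  [set x | v (x - c) <= r].

Definition sph_complete (F : fieldType) (v : F -> R) : Prop :=
  forall (c : nat -> F) (r : nat -> R),
    (forall n, 0 < r n) ->
    (forall n, cball v (c n.+1) (r n.+1) `<=` cball v (c n) (r n)) ->
    exists x, forall n, cball v (c n) (r n) x.

(* (L, vL) is an immediate valued-field extension of (K, vK) via iota:
   iota is isometric, and the value groups and residue fields coincide *)
Definition immediate_ext (K L : fieldType) (vK : K -> R) (vL : L -> R)
    (iota : K -> L) : Prop :=
  [/\ forall a, vL (iota a) = vK a,
      forall y, y != 0 -> exists a, vL y = vK a &
      forall y, vL y <= 1 -> exists a, vK a <= 1 /\ vL (y - iota a) < 1].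

Definition qnorm (K L : fieldType) (vL : L -> R) (iota : K -> L) (z : L) : R :=
  inf [set vL (z - iota a) | a in [set: K]].

(* pi(x_0), pi(x_1), ... are pairwise distinct, nonzero in L/K, and the set
   {pi(x_n)} is orthogonal in L/K for the quotient norm.  Note that
   lambda * pi(x) = pi(iota lambda * x). *)
Definition quot_orthogonal_seq (K L : fieldType) (vL : L -> R)
    (iota : K -> L) (x : nat -> L) : Prop :=
  [/\ forall n, ~ (exists a, x n = iota a),
      forall m n, m <> n -> ~ (exists a, x m - x n = iota a) &
      forall (s : seq nat), uniq s -> forall lam : nat -> K,
        qnorm vL iota (\sum_(i <- s) iota (lam i) * x i)
        = \big[Num.max/0]_(i <- s) qnorm vL iota (iota (lam i) * x i)].
End Defs.

From HB Require Import structures.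
From mathcomp Require Import all_boot all_order all_algebra.
From mathcomp Require Import boolp classical_sets reals.
From mathcomp Require Import ring lra.
Import Order.TTheory GRing.Theory Num.Theory.
Local Open Scope ring_scope.
Set Implicit Arguments. Unset Strict Implicit. Unset Printing Implicit Defensive.

(* Since K is not spherically complete but its immediate extension L is, some z in L lies
   outside K, and r := ||pi(z)|| > 0 because K is complete.  For an additive polynomial
   P = sum_i lam_i X^(p^i) over K and b in K, the polynomial P - b splits over the
   algebraically closed field K, and all its roots lie at distance >= r from z.  A Gauss-norm
   estimate then bounds the coefficients of P(X + z) - b = P(X) + P(z) - b, among them
   lam_k at X^(p^k), by |P(z) - b| / r^(p^k).  Hence ||pi(P(z))|| >= max_k |lam_k| r^(p^k);
   the reverse inequality is the ultrametric inequality in L/K together with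
   ||pi(z^(p^k))|| <= r^(p^k), as z^(p^k) - a^(p^k) = (z - a)^(p^k).  So the
   x_n := z^(p^n) are orthogonal in L/K. *)

Section NonArchimedeanAbsoluteValue.
Variables (R : realType) (F : fieldType) (v : F -> R).
Hypothesis v_absval : na_absval v.

Lemma absv_ge0 x : 0 <= v x. Proof. by case: v_absval. Qed.
Lemma absv_eq0 x : v x = 0 <-> x = 0. Proof. by case: v_absval. Qed.
Lemma absvM x y : v (x * y) = v x * v y. Proof. by case: v_absval. Qed.
Lemma absvD_le x y : v (x + y) <= Num.max (v x) (v y). Proof. by case: v_absval. Qed.

Lemma absv0 : v 0 = 0. Proof. exact/absv_eq0. Qed.

Lemma absv1 : v 1 = 1.
Proof.
have v1_neq0 : v 1 != 0 by apply/eqP => /absv_eq0/eqP; rewrite oner_eq0.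
by apply: (mulfI v1_neq0); rewrite -absvM !mulr1.
Qed.

Lemma absvN x : v (- x) = v x.
Proof.
have vN1 : v (-1) = 1.
  apply/eqP; rewrite -(@eqrXn2 _ 2) ?absv_ge0 ?ler01 //.
  by rewrite expr2 -absvM mulrNN mulr1 absv1 expr1n.
by rewrite -mulN1r absvM vN1 mul1r.
Qed.

Lemma absv_distC x y : v (x - y) = v (y - x).
Proof. by rewrite -absvN opprB. Qed.

Lemma absvX x n : v (x ^+ n) = v x ^+ n.
Proof. by elim: n => [|n IHn]; rewrite ?expr0 ?absv1 // !exprS absvM IHn. Qed.

Lemma absv_prod (I : Type) (s : seq I) (f : I -> F) :
  v (\prod_(i <- s) f i) = \prod_(i <- s) v (f i).
Proof. exact: (big_morph v absvM absv1). Qed.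

End NonArchimedeanAbsoluteValue.

Section GaussNormBound.
Variables (R : realType) (F : fieldType) (v : F -> R) (r : R).
Hypotheses (v_absval : na_absval v) (r_ge0 : 0 <= r).

(* Submultiplicativity of the Gauss norm |P|_r := max_i |P_i| r^i. *)
Lemma coef_prod_XsubC_le (cs : seq F) i :
  v (\prod_(c <- cs) ('X - c%:P))`_i * r ^+ i <= \prod_(c <- cs) Num.max r (v c).
Proof.
have absv_ge0 := absv_ge0 v_absval; have rX_ge0 := exprn_ge0 _ r_ge0.
elim: cs i => [|c cs IHcs] i.
  rewrite !big_nil coef1; case: i => [|i] /=.
    by rewrite (absv1 v_absval) mulr1.
  by rewrite (absv0 v_absval) mul0r.
set B := \prod_(c <- cs) Num.max r (v c) in IHcs *.
have IH0 : v (\prod_(c <- cs) ('X - c%:P))`_0 <= B by have := IHcs 0%N; rewrite mulr1.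
have B_ge0 : 0 <= B by apply: le_trans IH0.
rewrite !big_cons mulrBl coefB coefXM coefCM; case: i => [|i] /=.
  rewrite sub0r (absvN v_absval) (absvM v_absval) mulr1.
  by apply: ler_pM => //; rewrite le_max lexx orbT.
apply: le_trans (ler_wpM2r (rX_ge0 _) (absvD_le v_absval _ _)) _.
rewrite maxr_pMl // ge_max; apply/andP; split.
  rewrite exprS mulrCA; apply: le_trans (ler_wpM2l r_ge0 (IHcs i)) _.
  by rewrite ler_wpM2r ?le_max ?lexx.
rewrite (absvN v_absval) (absvM v_absval) -mulrA.
apply: le_trans (ler_wpM2l (absv_ge0 _) (IHcs i.+1)) _.
by rewrite ler_wpM2r ?le_max ?lexx ?orbT.
Qed.

Lemma coef_shift_le_horner (a z : F) (cs : seq F) i :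
  (forall c, c \in cs -> r <= v (z - c)) ->
  v (((a *: \prod_(c <- cs) ('X - c%:P)) \Po ('X + z%:P))`_i) * r ^+ i
    <= v (a *: \prod_(c <- cs) ('X - c%:P)).[z].
Proof.
move=> far_roots.
have shift : (\prod_(c <- cs) ('X - c%:P)) \Po ('X + z%:P)
    = \prod_(d <- [seq c - z | c <- cs]) ('X - d%:P).
  rewrite big_map (big_morph _ (fun p q => comp_polyM p q _) (comp_polyC 1 _)).
  by apply: eq_bigr => c _; rewrite comp_polyB comp_polyX comp_polyC polyCB; ring.
rewrite comp_polyZ shift coefZ hornerZ horner_prod !(absvM v_absval) -mulrA.
rewrite ler_wpM2l ?(absv_ge0 v_absval) // (absv_prod v_absval).
apply: le_trans (coef_prod_XsubC_le _ i) _; rewrite big_map le_eqVlt; apply/orP; left.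
apply/eqP/eq_big_seq => c c_in.
by rewrite hornerXsubC (absv_distC v_absval); apply/max_idPr/far_roots.
Qed.

End GaussNormBound.

Definition additive_poly (F : nzSemiRingType) (p : nat) (s : seq nat) (a : nat -> F) :
  {poly F} := \sum_(i <- s) a i *: 'X^(p ^ i).

Lemma pchar_nat_expn (F : nzRingType) p n : p \in [pchar F] -> [pchar F].-nat (p ^ n)%N.
Proof.
by move=> p_char; rewrite (eq_pnat _ (pcharf_eq p_char)) pnatX pnat_id ?(pcharf_prime p_char).
Qed.

Lemma horner_additive_poly (F : comNzRingType) p s (a : nat -> F) z :
  (additive_poly p s a).[z] = \sum_(i <- s) a i * z ^+ (p ^ i).
Proof. by rewrite horner_sum; apply: eq_bigr => i _; rewrite hornerZ hornerXn. Qed.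

Lemma map_additive_poly (F G : nzSemiRingType) (f : {rmorphism F -> G}) p s (a : nat -> F) :
  map_poly f (additive_poly p s a) = additive_poly p s (f \o a).
Proof.
by rewrite raddf_sum; apply: eq_bigr => i _; rewrite [LHS]map_polyZ map_polyXn.
Qed.

Section AdditivePolynomial.
Variables (F : fieldType) (p : nat) (s : seq nat) (a : nat -> F).
Hypothesis p_char : p \in [pchar F].
Local Notation P := (additive_poly p s a).

Lemma additive_poly_shift z : P \Po ('X + z%:P) = P + P.[z]%:P.
Proof.
have p_charX : p \in [pchar {poly F}] by apply: (rmorph_pchar (@polyC F)).
rewrite /additive_poly; elim: s => [|i s' IHs]; first by rewrite !big_nil comp_poly0 horner0 add0r.
rewrite !big_cons comp_polyD IHs comp_polyZ comp_Xn_poly exprDn_pchar ?pchar_nat_expn //.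
rewrite hornerD hornerZ hornerXn polyCD polyCM rmorphXn scalerDr.
by rewrite -[a i *: (z%:P ^+ _)]mul_polyC addrACA.
Qed.

Lemma coef_additive_poly_addC c k : uniq s -> k \in s -> (P + c%:P)`_(p ^ k) = a k.
Proof.
move=> s_uniq k_in; have p_gt1 := prime_gt1 (pcharf_prime p_char).
rewrite coefD coefC gtn_eqF ?expn_gt0 ?(ltnW p_gt1) // addr0 coef_sum (bigD1_seq k) //=.
rewrite coefZ coefXn eqxx mulr1 big1 ?addr0 // => i i_neq_k.
by rewrite coefZ coefXn eqn_exp2l // eq_sym (negbTE i_neq_k) mulr0.
Qed.

End AdditivePolynomial.

Lemma additive_poly_horner_ge (R : realType) (F : fieldType) (v : F -> R) p s
    (a : nat -> F) r z b lead (cs : seq F) k :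
  p \in [pchar F] -> na_absval v -> 0 <= r -> uniq s -> k \in s ->
  additive_poly p s a - b%:P = lead *: \prod_(c <- cs) ('X - c%:P) ->
  (forall c, c \in cs -> r <= v (z - c)) ->
  v (a k) * r ^+ (p ^ k) <= v ((additive_poly p s a).[z] - b).
Proof.
move=> p_char v_absval r_ge0 s_uniq k_in P_split far_roots.
have := coef_shift_le_horner v_absval r_ge0 lead (p ^ k) far_roots.
rewrite -P_split comp_polyB comp_polyC additive_poly_shift // -addrA -polyCB.
by rewrite coef_additive_poly_addC // !hornerE.
Qed.

Lemma exprn_sub_le (R : realFieldType) n (r t : R) :
  0 <= r -> r <= t -> t <= r + 1 -> t ^+ n - r ^+ n <= (t - r) * (n%:R * (r + 1) ^+ n).
Proof.
move=> r_ge0 le_rt le_tr1; elim: n => [|n IHn]; first by rewrite subrr mul0r mulr0.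
set A := t ^+ n in IHn *; set B := r ^+ n in IHn *; set C := (r + 1) ^+ n in IHn *.
have B_le_C : B <= C by rewrite lerXn2r ?nnegrE; lra.
have D_ge0 : 0 <= (t - r) * (n%:R * C) by rewrite !mulr_ge0 ?exprn_ge0 //; lra.
(* t^(n+1) - r^(n+1) = t (t^n - r^n) + (t - r) r^n *)
have tAB_le : t * (A - B) <= (r + 1) * ((t - r) * (n%:R * C)).
  by apply: le_trans (ler_wpM2l _ IHn) (ler_wpM2r D_ge0 le_tr1); lra.
have tB_le : (t - r) * B <= (t - r) * ((r + 1) * C).
  by rewrite ler_wpM2l ?subr_ge0 // -[B]mul1r ler_pM ?exprn_ge0 //; lra.
rewrite !exprS mulrS -/A -/B -/C; lra.
Qed.

Lemma exprn_right_continuous (R : realFieldType) n (r e : R) : 0 <= r -> 0 < e ->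
  exists2 d, 0 < d & forall t, r <= t <= r + d -> t ^+ n <= r ^+ n + e.
Proof.
move=> r_ge0 e_gt0; set C := n%:R * (r + 1) ^+ n.
have C_ge0 : 0 <= C by rewrite mulr_ge0 ?exprn_ge0 //; lra.
exists (Num.min 1 (e / (C + 1))) => [|t /andP[le_rt]].
  by rewrite lt_min ltr01 divr_gt0 //; lra.
rewrite -lerBlDl le_min => /andP[le_t1 le_te].
have le_tr1 : t <= r + 1 by lra.
have := exprn_sub_le n r_ge0 le_rt le_tr1; rewrite -/C.
have : (t - r) * C <= e.
  apply: le_trans (ler_wpM2r C_ge0 le_te) _.
  by rewrite mulrAC ler_pdivrMr; nra.
lra.
Qed.

Section QuotientNorm.
Variables (R : realType) (K L : fieldType) (vL : L -> R).
Hypothesis vL_absval : na_absval vL.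
Variable iota : {rmorphism K -> L}.
Local Open Scope classical_set_scope.

Let dists (y : L) := [set vL (y - iota a) | a in [set: K]].

Let dists_has_inf y : has_inf (dists y).
Proof.
split; first by exists (vL (y - iota 0)), 0.
by exists 0 => _ [a _ <-]; apply: absv_ge0.
Qed.

Lemma qnorm_le y a : qnorm vL iota y <= vL (y - iota a).
Proof. by apply: ge_inf; [case: (dists_has_inf y) | exists a]. Qed.

Lemma qnorm_ge y m : (forall a, m <= vL (y - iota a)) -> m <= qnorm vL iota y.
Proof. by move=> le_m; apply: lb_le_inf; [case: (dists_has_inf y) | move=> _ [a _ <-]]. Qed.

Lemma qnorm_ge0 y : 0 <= qnorm vL iota y.
Proof. by apply: qnorm_ge => a; apply: absv_ge0. Qed.

Lemma qnorm_approx y e : 0 < e -> exists a, vL (y - iota a) < qnorm vL iota y + e.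
Proof. by move=> e_gt0; have [_ [a _ <-]] := inf_adherent e_gt0 (dists_has_inf y); exists a. Qed.

Lemma qnorm_le_approx y m :
  (forall e, 0 < e -> exists a, vL (y - iota a) <= m + e) -> qnorm vL iota y <= m.
Proof.
move=> approx; apply/ler_addgt0Pr => e /approx[a le_ya].
exact: le_trans (qnorm_le y a) le_ya.
Qed.

Lemma qnorm_iota a : qnorm vL iota (iota a) = 0.
Proof.
apply/le_anti; rewrite qnorm_ge0 andbT.
by rewrite (le_trans (qnorm_le _ a)) // subrr (absv0 vL_absval).
Qed.

Lemma qnormD_le y1 y2 :
  qnorm vL iota (y1 + y2) <= Num.max (qnorm vL iota y1) (qnorm vL iota y2).
Proof.
apply: qnorm_le_approx => e e_gt0.
have [a1 lt1] := qnorm_approx y1 e_gt0; have [a2 lt2] := qnorm_approx y2 e_gt0.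
exists (a1 + a2); rewrite rmorphD opprD addrACA.
apply: le_trans (absvD_le vL_absval _ _) _; rewrite ge_max.
by apply/andP; split; [apply: le_trans (ltW lt1) _ | apply: le_trans (ltW lt2) _];
  rewrite lerD2r le_max lexx ?orbT.
Qed.

Lemma qnorm_sum_le (I : Type) (s : seq I) (f : I -> L) :
  qnorm vL iota (\sum_(i <- s) f i) <= \big[Num.max/0]_(i <- s) qnorm vL iota (f i).
Proof.
elim/big_rec2: _ => [|i y m _ le_ym]; first by rewrite -(rmorph0 iota) qnorm_iota.
exact: le_trans (qnormD_le _ _) (le_max2 (lexx _) le_ym).
Qed.

Lemma qnormZ_le c y : qnorm vL iota (iota c * y) <= vL (iota c) * qnorm vL iota y.
Proof.
apply: qnorm_le_approx => e e_gt0; have c_ge0 := absv_ge0 vL_absval (iota c).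
have [a lt_ya] := qnorm_approx y (divr_gt0 e_gt0 (ltr_wpDl c_ge0 ltr01)).
exists (c * a); rewrite rmorphM -mulrBr (absvM vL_absval).
apply: le_trans (ler_wpM2l c_ge0 (ltW lt_ya)) _.
by rewrite mulrDr lerD2l mulrA ler_pdivrMr; nra.
Qed.

Lemma qnormX_pchar_le p n y : p \in [pchar L] ->
  qnorm vL iota (y ^+ (p ^ n)) <= qnorm vL iota y ^+ (p ^ n).
Proof.
move=> p_char; apply: qnorm_le_approx => e e_gt0.
have [d d_gt0 near_le] := exprn_right_continuous (p ^ n) (qnorm_ge0 y) e_gt0.
have [a lt_ya] := qnorm_approx y d_gt0.
have frobB : (y - iota a) ^+ (p ^ n) = y ^+ (p ^ n) - iota a ^+ (p ^ n).
  by rewrite exprDn_pchar ?exprNn_pchar ?pchar_nat_expn.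
exists (a ^+ (p ^ n)); rewrite rmorphXn -frobB (absvX vL_absval).
by apply: near_le; rewrite qnorm_le ltW.
Qed.

End QuotientNorm.

Section AdditiveQuotientNorm.
Variables (R : realType) (K : closedFieldType) (L : fieldType) (vL : L -> R) (p : nat).
Hypotheses (p_char : p \in [pchar K]) (vL_absval : na_absval vL).
Variables (iota : {rmorphism K -> L}) (z : L).
Local Notation r := (qnorm vL iota z).

Lemma qnorm_additive_ge s (lam : nat -> K) k : uniq s -> k \in s ->
  vL (iota (lam k)) * r ^+ (p ^ k)
    <= qnorm vL iota (\sum_(i <- s) iota (lam i) * z ^+ (p ^ i)).
Proof.
move=> s_uniq k_in; apply: (qnorm_ge vL_absval) => b.
have [cs P_split] := closed_field_poly_normal (additive_poly p s lam - b%:P).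
have := congr1 (map_poly iota) P_split.
rewrite rmorphB /= map_additive_poly map_polyC map_polyZ map_prod_XsubC.
rewrite -(big_map iota xpredT (fun c => 'X - c%:P)) => P_split_L.
have far_roots c : c \in [seq iota c | c <- cs] -> r <= vL (z - c).
  by case/mapP=> a _ ->; apply: qnorm_le.
have := additive_poly_horner_ge (rmorph_pchar iota p_char) vL_absval
  (qnorm_ge0 vL_absval iota z) s_uniq k_in P_split_L far_roots.
by rewrite horner_additive_poly.
Qed.

Lemma qnorm_additive_term (c : K) k :
  qnorm vL iota (iota c * z ^+ (p ^ k)) = vL (iota c) * r ^+ (p ^ k).
Proof.
apply/le_anti/andP; split.
  apply: le_trans (qnormZ_le vL_absval _ c _) _.
  by rewrite ler_wpM2l ?(absv_ge0 vL_absval) ?qnormX_pchar_le ?(rmorph_pchar iota).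
by have := @qnorm_additive_ge [:: k] (fun=> c) k isT (mem_head k [::]); rewrite big_seq1.
Qed.

Lemma qnorm_additive s (lam : nat -> K) : uniq s ->
  qnorm vL iota (\sum_(i <- s) iota (lam i) * z ^+ (p ^ i))
    = \big[Num.max/0]_(i <- s) qnorm vL iota (iota (lam i) * z ^+ (p ^ i)).
Proof.
move=> s_uniq; apply/le_anti/andP; split; first exact: (qnorm_sum_le vL_absval).
rewrite big_seq; apply: bigmax_le => [|k k_in]; first exact: (qnorm_ge0 vL_absval).
by rewrite qnorm_additive_term qnorm_additive_ge.
Qed.

Lemma qnorm_frobenius n : qnorm vL iota (z ^+ (p ^ n)) = r ^+ (p ^ n).
Proof. by have := qnorm_additive_term 1 n; rewrite rmorph1 mul1r (absv1 vL_absval) mul1r. Qed.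

Lemma qnorm_frobeniusB m n : m != n ->
  r ^+ (p ^ m) <= qnorm vL iota (z ^+ (p ^ m) - z ^+ (p ^ n)).
Proof.
move=> m_neq_n; pose lam i : K := if i == m then 1 else -1.
have mn_uniq : uniq [:: m; n] by rewrite /= inE m_neq_n.
have := qnorm_additive_ge lam mn_uniq (mem_head m _).
rewrite !big_cons big_nil /lam eqxx eq_sym (negbTE m_neq_n) rmorph1 rmorphN1 addr0.
by rewrite (absv1 vL_absval) !mul1r mulN1r.
Qed.

End AdditiveQuotientNorm.

Lemma eventually_invSn_lt (R : realType) (e : R) : 0 < e ->
  exists N, forall n, (N <= n)%N -> n.+1%:R^-1 < e.
Proof.
move=> e_gt0; have [N] := ltr_add_invr e_gt0; rewrite add0r => lt_Ne.
exists N => n le_Nn; apply: le_lt_trans lt_Ne.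
by rewrite lef_pV2 ?posrE ?ltr0Sn // ler_nat ltnS.
Qed.

Section IsometricEmbedding.
Variables (R : realType) (K L : fieldType) (vK : K -> R) (vL : L -> R).
Variable iota : {rmorphism K -> L}.
Hypothesis iota_isometry : forall a, vL (iota a) = vK a.

Lemma exists_notin_image : ~ sph_complete vK -> sph_complete vL ->
  exists z, forall a, z <> iota a.
Proof.
move=> K_not_sph L_sph; apply: contrapT => iota_surj; apply: K_not_sph.
have {}iota_surj y : exists a, y = iota a.
  by apply: contrapT => y_notin; apply: iota_surj; exists y => a y_eq; apply: y_notin; exists a.
have cball_iota c t a : cball vL (iota c) t (iota a) = cball vK c t a.
  by rewrite /cball /= -rmorphB iota_isometry.
move=> c t t_gt0 nested.
have [y y_in] : exists y, forall n, cball vL ((iota \o c) n) (t n) y.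
  apply: L_sph => // n y; have [a ->] := iota_surj y.
  by rewrite /= !cball_iota; apply: (nested n).
by have [a y_eq] := iota_surj y; exists a => n; rewrite -cball_iota -y_eq; apply: y_in.
Qed.

Lemma qnorm_gt0 z : na_absval vL -> complete_absval vK -> (forall a, z <> iota a) ->
  0 < qnorm vL iota z.
Proof.
move=> vL_absval K_complete z_notin; rewrite lt_def qnorm_ge0 // andbT.
apply/eqP => qz0.
have /choice[u near_z] : forall n, exists a, vL (z - iota a) < n.+1%:R^-1.
  move=> n; rewrite -[_^-1]add0r -qz0.
  by apply: (qnorm_approx vL_absval); rewrite invr_gt0 ltr0Sn.
have [l u_to_l] : exists l, forall e, 0 < e ->
    exists N, forall n, (N <= n)%N -> vK (u n - l) < e.
  apply: K_complete => e /eventually_invSn_lt[N small]; exists N => m n le_Nm le_Nn.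
  rewrite -iota_isometry rmorphB.
  have -> : iota (u m) - iota (u n) = (iota (u m) - z) + (z - iota (u n)).
    by rewrite addrA subrK.
  apply: le_lt_trans (absvD_le vL_absval _ _) _.
  by rewrite (absv_distC vL_absval) gt_max !(lt_trans (near_z _)) ?small.
apply: (z_notin l); apply/subr0_eq/(absv_eq0 vL_absval)/le_anti.
rewrite absv_ge0 // andbT; apply/ler_addgt0Pr => e e_gt0; rewrite add0r.
have [N1 lt_l] := u_to_l e e_gt0; have [N2 lt_z] := eventually_invSn_lt e_gt0.
pose n := maxn N1 N2; rewrite -(subrK (iota (u n)) z) -addrA -rmorphB.
apply: ltW; apply: le_lt_trans (absvD_le vL_absval _ _) _.
rewrite iota_isometry gt_max lt_l ?leq_maxl // andbT.
by rewrite (lt_trans (near_z n)) // lt_z // leq_maxr.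
Qed.

End IsometricEmbedding.

Theorem mainTheorem3 (R : realType) (K : closedFieldType) (L : fieldType)
    (vK : K -> R) (vL : L -> R) (iota : {rmorphism K -> L}) (p : nat) :
  p \in [pchar K] ->
  na_absval vK -> nontrivial_absval vK -> complete_absval vK ->
  ~ sph_complete vK ->
  na_absval vL -> sph_complete vL -> immediate_ext vK vL iota ->
  exists x : nat -> L, quot_orthogonal_seq vL iota x.
Proof.
move=> p_char _ _ K_complete K_not_sph vL_absval L_sph [iota_isometry _ _].
have [z z_notin] := exists_notin_image iota_isometry K_not_sph L_sph.
have qz_gt0 := qnorm_gt0 iota_isometry vL_absval K_complete z_notin.
exists (fun n => z ^+ (p ^ n)); split.
- move=> n [a z_eq]; have := qnorm_frobenius p_char vL_absval iota z n.
  by rewrite z_eq qnorm_iota // => /eqP; rewrite eq_sym expf_eq0 (gt_eqF qz_gt0) andbF.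
- move=> m n /eqP m_neq_n [a z_eq]; have := qnorm_frobeniusB p_char vL_absval iota z m_neq_n.
  by rewrite z_eq qnorm_iota // leNgt exprn_gt0.
- by move=> s s_uniq lam; apply: qnorm_additive.
Qed.
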